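(* Let $n$ be a positive integer, let $u$ be the unique positive real root of $x^{2n+1} + x^{2n} + \cdots + x^{n} - x^{n-1} - \cdots - x - 1 = 0$, and let $L(x)=\mathrm{Li}_2(x)+\tfrac12\log x\,\log(1-x)$ for $0<x<1$ denote Rogers' dilogarithm. Then $$2L\!\left(u^{n+2}\right) - 2L\!\left(u^{n}\right) - L\!\left(u^2\right) = -\zeta(2).$$
   Context: $\mathrm{Li}_2(x)=\sum_{k\ge1}x^k/k^2$, $\log$ is the real natural logarithm, $\zeta(2)=\pi^2/6$. *)

From Stdlib Require Import Reals.
From Coquelicot Require Import Coquelicot.
Open Scope R_scope.

Definition Li2 (x : R) : R :=
  Series (fun k : nat => x ^ (S k) / (INR (S k)) ^ 2).

Definition RogersL (x : R) : R :=
  Li2 x + / 2 * ln x * ln (1 - x).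

Definition Pn (n : nat) (x : R) : R :=
  sum_f_R0 (fun k => x ^ (n + k)) (S n) - sum_f_R0 (fun k => x ^ k) (pred n).

Definition zeta2 : R := PI ^ 2 / 6.

From Coquelicot Require Import Coquelicot.
From Stdlib Require Import Reals Lra Lia.
Open Scope R_scope.

(* Multiplying P_n(u) = 0 by u - 1 gives (u^n)^2 u^2 - 2 u^n + 1 = 0, so with
   t = 1 - u^(n+2) in (0,1) one has u^n = 1/(1+t) and u^2 = 1 - t^2.  The left-hand
   side is therefore F(t) = 2 L(1-t) - 2 L(1/(1+t)) - L(1-t^2).  Since
   L'(x) = -(log(1-x)/x + log x/(1-x))/2, the logarithms in F'(t) cancel and F is
   constant on (0,1); letting t -> 0 and using L(x) -> Li_2(1) = zeta(2) as x -> 1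
   (Abel's theorem and Euler's sum, the latter obtained from the Wallis-type integrals
   of cos^(2m) x and x^2 cos^(2m) x over [0, pi/2]) gives F = -zeta(2). *)

Lemma continuous_of_ex_derive (f : R -> R) (x : R) : ex_derive f x -> continuous f x.
Proof. exact (ex_derive_continuous (K := R_AbsRing) (V := R_NormedModule) f x). Qed.

Lemma RInt_derive_eq_0 (F dF : R -> R) (a b : R) :
  (forall x, is_derive F x (dF x)) -> (forall x, continuous dF x) ->
  F a = F b -> RInt dF a b = 0.
Proof.
intros HF HdF Hab. apply is_RInt_unique.
rewrite <- (minus_eq_zero (F a)), Hab at 1.
apply (is_RInt_derive (V := R_CompleteNormedModule)); intros x _; auto.
Qed.

Lemma RInt_scal_minus_scal (g h : R -> R) (a b al be : R) :
  ex_RInt g a b -> ex_RInt h a b ->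
  RInt (fun x => al * g x - be * h x) a b = al * RInt g a b - be * RInt h a b.
Proof.
intros Hg Hh. apply is_RInt_unique.
apply (is_RInt_minus (fun x => al * g x) (fun x => be * h x)).
- apply (is_RInt_scal g), (RInt_correct (V := R_CompleteNormedModule)); auto.
- apply (is_RInt_scal h), (RInt_correct (V := R_CompleteNormedModule)); auto.
Qed.

Lemma RInt_plus_scal_minus_scal (f g h : R -> R) (a b al be : R) :
  ex_RInt f a b -> ex_RInt g a b -> ex_RInt h a b ->
  RInt (fun x => f x + al * g x - be * h x) a b = RInt f a b + al * RInt g a b - be * RInt h a b.
Proof.
intros Hf Hg Hh. apply is_RInt_unique.
apply (is_RInt_minus (fun x => f x + al * g x) (fun x => be * h x)).
- apply (is_RInt_plus f (fun x => al * g x)).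
  + apply (RInt_correct (V := R_CompleteNormedModule)); auto.
  + apply (is_RInt_scal g), (RInt_correct (V := R_CompleteNormedModule)); auto.
- apply (is_RInt_scal h), (RInt_correct (V := R_CompleteNormedModule)); auto.
Qed.

Lemma is_derive_0_eq (f : R -> R) (a b x y : R) :
  (forall t, a < t < b -> is_derive f t 0) -> a < x < b -> a < y < b -> f x = f y.
Proof.
intros Hf Hx Hy.
destruct (Rtotal_order x y) as [Hxy | [-> | Hyx]]; auto.
- apply eq_is_derive; auto. intros t Ht. apply Hf; lra.
- symmetry. apply eq_is_derive; auto. intros t Ht. apply Hf; lra.
Qed.

Lemma ln_le_sub_1 (y : R) : 0 < y -> ln y <= y - 1.
Proof. intro Hy. pose proof (exp_ineq1_le (ln y)) as H. rewrite exp_ln in H; lra. Qed.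

Lemma x_cos_le_sin (x : R) : 0 <= x <= PI / 2 -> x * cos x <= sin x.
Proof.
intros [H0 H1].
destruct (MVT_gen (fun t => sin t - t * cos t) 0 x (fun t => t * sin t)) as [c [Hc E]].
- intros t _. auto_derive; auto. ring.
- intros t _. apply continuity_pt_filterlim, (continuous_of_ex_derive (fun t => sin t - t * cos t)).
  auto_derive; auto.
- rewrite Rmin_left, Rmax_right in Hc by lra. rewrite sin_0 in E.
  assert (0 <= sin c) by (apply sin_ge_0; pose proof PI_RGT_0; lra).
  assert (0 <= c * sin c * (x - 0)) by (apply Rmult_le_pos; [apply Rmult_le_pos |]; lra).
  lra.
Qed.

(** * Euler's sum *)

Definition Icos (m : nat) : R := RInt (fun x => cos x ^ (2 * m)) 0 (PI / 2).
Definition Jcos (m : nat) : R := RInt (fun x => x ^ 2 * cos x ^ (2 * m)) 0 (PI / 2).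

Lemma ex_RInt_cos_pow (k : nat) : ex_RInt (fun x => cos x ^ k) 0 (PI / 2).
Proof.
apply (ex_RInt_continuous (V := R_CompleteNormedModule)).
intros; apply continuous_of_ex_derive; auto_derive; auto.
Qed.

Lemma ex_RInt_sq_cos_pow (k : nat) : ex_RInt (fun x => x ^ 2 * cos x ^ k) 0 (PI / 2).
Proof.
apply (ex_RInt_continuous (V := R_CompleteNormedModule)).
intros; apply continuous_of_ex_derive; auto_derive; auto.
Qed.

Lemma Icos_0 : Icos 0 = PI / 2.
Proof. unfold Icos. simpl. rewrite RInt_const. unfold scal; simpl; unfold mult; simpl. ring. Qed.

Lemma Jcos_0 : Jcos 0 = (PI / 2) ^ 3 / 3.
Proof.
unfold Jcos. apply is_RInt_unique.
replace ((PI / 2) ^ 3 / 3) with (minus ((PI / 2) ^ 3 / 3) (0 ^ 3 / 3)).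
- apply (is_RInt_derive (V := R_CompleteNormedModule) (fun x => x ^ 3 / 3)).
  + intros x _. auto_derive; auto. simpl; field.
  + intros x _. apply continuous_of_ex_derive; auto_derive; auto.
- change ((PI / 2) ^ 3 / 3 - 0 ^ 3 / 3 = (PI / 2) ^ 3 / 3). field.
Qed.

Lemma Icos_S (m : nat) : (2 * INR m + 2) * Icos (S m) = (2 * INR m + 1) * Icos m.
Proof.
apply Rminus_diag_uniq. unfold Icos. replace (2 * S m)%nat with (2 * m + 2)%nat by lia.
rewrite <- RInt_scal_minus_scal by apply ex_RInt_cos_pow.
apply (RInt_derive_eq_0 (fun x => sin x * cos x ^ (2 * m + 1))).
- intro x. auto_derive; trivial.
  replace (Init.Nat.pred (m + (m + 0) + 1)) with (2 * m)%nat by lia.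
  replace (m + (m + 0) + 1)%nat with (2 * m + 1)%nat by lia.
  rewrite !pow_add, !plus_INR, !mult_INR. simpl.
  set (c := cos x ^ (2 * m)). ring_simplify.
  replace (sin x ^ 2) with (1 - cos x ^ 2) by (rewrite <- (sin2_cos2 x); unfold Rsqr; ring).
  ring.
- intros x. apply continuous_of_ex_derive; auto_derive; auto.
- rewrite cos_PI2, sin_0, pow_i by lia. ring.
Qed.

Lemma Jcos_S (m : nat) :
  Icos (S m) + 2 * (INR m + 1) ^ 2 * Jcos (S m) = (INR m + 1) * (2 * INR m + 1) * Jcos m.
Proof.
apply Rminus_diag_uniq. unfold Icos, Jcos. replace (2 * S m)%nat with (2 * m + 2)%nat by lia.
rewrite <- (RInt_plus_scal_minus_scal (fun x => cos x ^ (2 * m + 2))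
  (fun x => x ^ 2 * cos x ^ (2 * m + 2)) (fun x => x ^ 2 * cos x ^ (2 * m)));
  [| apply ex_RInt_cos_pow | apply ex_RInt_sq_cos_pow | apply ex_RInt_sq_cos_pow].
apply (RInt_derive_eq_0 (fun x => x * cos x ^ (2 * m + 2) + (INR m + 1) * x ^ 2 * sin x * cos x ^ (2 * m + 1))).
- intro x. auto_derive; trivial.
  replace (Init.Nat.pred (m + (m + 0) + 1)) with (2 * m)%nat by lia.
  replace (Init.Nat.pred (m + (m + 0) + 2)) with (2 * m + 1)%nat by lia.
  replace (m + (m + 0) + 1)%nat with (2 * m + 1)%nat by lia.
  replace (m + (m + 0) + 2)%nat with (2 * m + 2)%nat by lia.
  rewrite !pow_add, !plus_INR, !mult_INR. simpl.
  set (c := cos x ^ (2 * m)). ring_simplify.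
  replace (sin x ^ 2) with (1 - cos x ^ 2) by (rewrite <- (sin2_cos2 x); unfold Rsqr; ring).
  ring.
- intros x. apply continuous_of_ex_derive; auto_derive; auto.
- rewrite cos_PI2, !pow_i by lia. ring.
Qed.

Lemma Icos_pos (m : nat) : 0 < Icos m.
Proof.
induction m as [| m IH].
- rewrite Icos_0. pose proof PI_RGT_0; lra.
- pose proof (Icos_S m) as E.
  pose proof (pos_INR m).
  apply (Rmult_lt_reg_l (2 * INR m + 2)); [lra |].
  rewrite Rmult_0_r, E. apply Rmult_lt_0_compat; lra.
Qed.

Lemma Jcos_ge_0 (m : nat) : 0 <= Jcos m.
Proof.
unfold Jcos. apply RInt_ge_0.
- pose proof PI_RGT_0; lra.
- apply ex_RInt_sq_cos_pow.
- intros x _. rewrite pow_mult. apply Rmult_le_pos; [apply pow2_ge_0 | apply pow_le, pow2_ge_0].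
Qed.

(* Pointwise, x^2 cos^2 x <= sin^2 x = 1 - cos^2 x on [0, pi/2]. *)
Lemma Jcos_S_le (m : nat) : Jcos (S m) <= Icos m - Icos (S m).
Proof.
unfold Jcos, Icos. replace (2 * S m)%nat with (2 * m + 2)%nat by lia.
set (I0 := RInt (fun x => cos x ^ (2 * m)) 0 (PI / 2)).
set (I1 := RInt (fun x => cos x ^ (2 * m + 2)) 0 (PI / 2)).
replace (I0 - I1) with (1 * I0 - 1 * I1) by ring. unfold I0, I1.
rewrite <- RInt_scal_minus_scal by apply ex_RInt_cos_pow.
apply RInt_le.
- pose proof PI_RGT_0; lra.
- apply ex_RInt_sq_cos_pow.
- apply (ex_RInt_continuous (V := R_CompleteNormedModule)).
  intros; apply continuous_of_ex_derive; auto_derive; auto.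
- intros x Hx.
  assert (Hc : 0 <= cos x) by (apply cos_ge_0; pose proof PI_RGT_0; lra).
  pose proof (x_cos_le_sin x ltac:(lra)) as Hxc.
  assert (Hsq : (x * cos x) ^ 2 <= 1 - cos x ^ 2).
  { assert (0 <= x * cos x) by (apply Rmult_le_pos; lra).
    rewrite <- (sin2_cos2 x). unfold Rsqr. simpl. nra. }
  assert (0 <= cos x ^ (2 * m)) by (rewrite pow_mult; apply pow_le, pow2_ge_0).
  rewrite pow_add, !Rmult_1_l.
  apply Rle_trans with ((1 - cos x ^ 2) * cos x ^ (2 * m)); [| right; ring].
  replace (x ^ 2 * (cos x ^ (2 * m) * cos x ^ 2)) with ((x * cos x) ^ 2 * cos x ^ (2 * m)) by ring.
  apply Rmult_le_compat_r; assumption.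
Qed.

Lemma is_lim_seq_inv_INR_S : is_lim_seq (fun n => / INR (S n)) 0.
Proof.
change (Finite 0) with (Rbar_inv p_infty).
apply is_lim_seq_inv; [| discriminate].
apply (is_lim_seq_incr_1 INR), is_lim_seq_INR.
Qed.

Definition inv_sq (k : nat) : R := / INR (S k) ^ 2.

(* [basel_tail m] turns out to be the tail [sum_(k > m) 1/k^2]. *)
Definition basel_tail (m : nat) : R := 2 * Jcos m / Icos m.

Lemma basel_tail_0 : basel_tail 0 = zeta2.
Proof. unfold basel_tail, zeta2. rewrite Icos_0, Jcos_0. pose proof PI_RGT_0. field. lra. Qed.

Lemma basel_tail_S (m : nat) : basel_tail m - basel_tail (S m) = inv_sq m.
Proof.
unfold basel_tail, inv_sq.
pose proof (Icos_S m) as EI. pose proof (Jcos_S m) as EJ.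
pose proof (Icos_pos m). pose proof (Icos_pos (S m)).
rewrite S_INR.
set (a := INR m) in *. assert (0 <= a) by apply pos_INR.
assert (E0 : Icos m = (2 * a + 2) / (2 * a + 1) * Icos (S m)) by (field_simplify_eq; lra).
assert (E1 : Jcos (S m) = ((a + 1) * (2 * a + 1) * Jcos m - Icos (S m)) / (2 * (a + 1) ^ 2))
  by (field_simplify_eq; nra).
rewrite E1, E0. field. lra.
Qed.

Lemma basel_tail_S_bound (m : nat) : 0 <= basel_tail (S m) <= 2 / INR (S m).
Proof.
unfold basel_tail.
pose proof (Icos_S m) as EI. pose proof (Jcos_S_le m) as HJ.
pose proof (Jcos_ge_0 (S m)). pose proof (Icos_pos (S m)).
rewrite S_INR.
set (a := INR m) in *. assert (0 <= a) by apply pos_INR.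
assert (0 <= (2 * a + 1) * (Icos m - Icos (S m) - Jcos (S m))) by (apply Rmult_le_pos; lra).
assert (0 <= Jcos (S m) * a) by (apply Rmult_le_pos; lra).
assert (HJa : Jcos (S m) * (a + 1) <= Icos (S m)) by lra.
split.
- apply Rmult_le_pos; [lra | apply Rlt_le, Rinv_0_lt_compat; lra].
- assert (E : 2 / (a + 1) - 2 * Jcos (S m) / Icos (S m)
            = 2 * (Icos (S m) - Jcos (S m) * (a + 1)) / ((a + 1) * Icos (S m))) by (field; lra).
  assert (0 <= 2 * (Icos (S m) - Jcos (S m) * (a + 1)) / ((a + 1) * Icos (S m))).
  { apply Rdiv_le_0_compat; [lra | apply Rmult_lt_0_compat; lra]. }
  lra.
Qed.

Lemma sum_inv_sq (N : nat) : sum_f_R0 inv_sq N = zeta2 - basel_tail (S N).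
Proof.
induction N as [| N IH]; simpl sum_f_R0.
- rewrite <- basel_tail_S, basel_tail_0. ring.
- rewrite IH, <- basel_tail_S. ring.
Qed.

Lemma is_series_inv_sq : is_series inv_sq zeta2.
Proof.
change (is_lim_seq (sum_n inv_sq) zeta2).
apply (is_lim_seq_le_le (fun N => zeta2 - 2 * / INR (S N)) _ (fun _ => zeta2)).
- intro N. rewrite sum_n_Reals, sum_inv_sq. pose proof (basel_tail_S_bound N). unfold Rdiv in *. lra.
- replace (Finite zeta2) with (Finite (zeta2 - 2 * 0)) by (f_equal; ring).
  apply is_lim_seq_minus'; [apply is_lim_seq_const |].
  apply is_lim_seq_mult'; [apply is_lim_seq_const | apply is_lim_seq_inv_INR_S].
- apply is_lim_seq_const.
Qed.

(** * The dilogarithm as a power series *)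

Definition inv_nat (k : nat) : R := / INR (S k).

Lemma PS_derive_incr_1_inv_sq (n : nat) : PS_derive (PS_incr_1 inv_sq) n = inv_nat n.
Proof. change (INR (S n) * / INR (S n) ^ 2 = / INR (S n)). field. apply not_0_INR; lia. Qed.

Lemma PS_derive_incr_1_inv_nat (n : nat) : PS_derive (PS_incr_1 inv_nat) n = 1.
Proof. change (INR (S n) * / INR (S n) = 1). field. apply not_0_INR; lia. Qed.

Lemma CV_radius_derive_incr_1 (a : nat -> R) : CV_radius (PS_derive (PS_incr_1 a)) = CV_radius a.
Proof. rewrite CV_radius_derive. apply CV_radius_incr_1. Qed.

Lemma CV_radius_const_1 : CV_radius (fun _ => 1) = 1.
Proof.
rewrite (CV_radius_finite_DAlembert _ 1); [f_equal; field | intros; lra | lra |].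
apply is_lim_seq_ext with (fun _ => 1); [| apply is_lim_seq_const].
intros. rewrite Rdiv_diag, Rabs_R1 by lra. reflexivity.
Qed.

Lemma CV_radius_inv_nat : CV_radius inv_nat = 1.
Proof.
rewrite <- CV_radius_derive_incr_1, <- CV_radius_const_1.
apply CV_radius_ext, PS_derive_incr_1_inv_nat.
Qed.

Lemma CV_radius_inv_sq : CV_radius inv_sq = 1.
Proof.
rewrite <- CV_radius_derive_incr_1, <- CV_radius_inv_nat.
apply CV_radius_ext, PS_derive_incr_1_inv_sq.
Qed.

Lemma PSeries_const_1 (x : R) : Rabs x < 1 -> PSeries (fun _ => 1) x = / (1 - x).
Proof.
intro Hx. apply is_series_unique.
apply is_series_ext with (fun n => x ^ n); [| apply is_series_geom; assumption].
intro n. unfold scal; simpl; unfold mult; simpl. ring.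
Qed.

(* Both sides vanish at 0 and have derivative 1 / (1 - x). *)
Lemma PSeries_incr_1_inv_nat (x : R) : -1 < x < 1 -> PSeries (PS_incr_1 inv_nat) x = - ln (1 - x).
Proof.
intro Hx.
set (g := fun y => PSeries (PS_incr_1 inv_nat) y + ln (1 - y)).
assert (g0 : g 0 = 0).
{ unfold g. rewrite PSeries_0, Rminus_0_r, ln_1. apply Rplus_0_r. }
assert (g x = g 0); [| unfold g in *; lra].
apply (is_derive_0_eq g (-1) 1); [| lra | lra].
intros y Hy. assert (Hy' : Rabs y < 1) by (apply Rabs_def1; lra).
replace 0 with (plus (/ (1 - y)) (- / (1 - y))) by (unfold plus; simpl; ring).
apply (is_derive_plus (PSeries (PS_incr_1 inv_nat)) (fun y => ln (1 - y))).
- rewrite <- (PSeries_const_1 y Hy'),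
    <- (PSeries_ext (PS_derive (PS_incr_1 inv_nat))) by apply PS_derive_incr_1_inv_nat.
  apply is_derive_PSeries. rewrite CV_radius_incr_1, CV_radius_inv_nat. exact Hy'.
- auto_derive; [lra | field; lra].
Qed.

Lemma Li2_PSeries (x : R) : Li2 x = PSeries (PS_incr_1 inv_sq) x.
Proof.
rewrite PSeries_incr_1. unfold Li2, PSeries. rewrite <- Series_scal_l.
apply Series_ext. intro k. unfold inv_sq.
rewrite <- tech_pow_Rmult. field. apply not_0_INR. lia.
Qed.

Lemma is_derive_Li2 (x : R) : 0 < x < 1 -> is_derive Li2 x (- ln (1 - x) / x).
Proof.
intro Hx. assert (Hx' : Rabs x < 1) by (apply Rabs_def1; lra).
apply (is_derive_ext (PSeries (PS_incr_1 inv_sq))); [intro t; symmetry; apply Li2_PSeries |].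
replace (- ln (1 - x) / x) with (PSeries (PS_derive (PS_incr_1 inv_sq)) x).
- apply is_derive_PSeries. rewrite CV_radius_incr_1, CV_radius_inv_sq. exact Hx'.
- rewrite (PSeries_ext _ inv_nat) by apply PS_derive_incr_1_inv_sq.
  rewrite <- PSeries_incr_1_inv_nat, PSeries_incr_1 by lra. field. lra.
Qed.

Lemma is_lim_seq_Li2_1 (v : nat -> R) : (forall n, 0 < v n < 1) -> is_lim_seq v 1 ->
  is_lim_seq (fun n => Li2 (v n)) zeta2.
Proof.
intros Hv Hl.
assert (Hs : is_pseries inv_sq 1 zeta2).
{ apply is_series_ext with inv_sq; [| apply is_series_inv_sq].
  intro n. rewrite pow_n_pow, pow1. exact (eq_sym (scal_one _)). }
assert (HA : filterlim (PSeries inv_sq) (at_left 1) (locally zeta2)).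
{ pose proof (Abel inv_sq) as A. rewrite CV_radius_inv_sq in A.
  replace zeta2 with (PSeries inv_sq 1) by (apply is_pseries_unique, Hs).
  apply A; simpl; [lra | exact I | exists zeta2; exact Hs]. }
assert (Hv1 : filterlim v eventually (at_left 1)).
{ intros P HP. destruct (Hl _ HP) as [N HN]. exists N. intros n Hn. apply HN; [exact Hn | apply Hv]. }
apply is_lim_seq_ext with (fun n => v n * PSeries inv_sq (v n)).
{ intro n. rewrite Li2_PSeries, PSeries_incr_1. reflexivity. }
rewrite <- (Rmult_1_l zeta2).
apply is_lim_seq_mult'; [exact Hl | eapply filterlim_comp; [exact Hv1 | exact HA]].
Qed.

(** * Rogers' dilogarithm *)

Definition RogersL_deriv (x : R) : R := - / 2 * (ln (1 - x) / x + ln x / (1 - x)).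

Lemma is_derive_RogersL (x : R) : 0 < x < 1 -> is_derive RogersL x (RogersL_deriv x).
Proof.
intro Hx.
assert (H : is_derive (fun y => / 2 * ln y * ln (1 - y)) x (/ 2 * (ln (1 - x) / x - ln x / (1 - x)))).
{ auto_derive; [repeat split; lra | unfold Rminus; field; lra]. }
unfold RogersL_deriv.
replace (- / 2 * (ln (1 - x) / x + ln x / (1 - x)))
  with (plus (- ln (1 - x) / x) (/ 2 * (ln (1 - x) / x - ln x / (1 - x))))
  by (unfold plus; simpl; field; lra).
apply (is_derive_plus Li2 (fun y => / 2 * ln y * ln (1 - y))); [apply is_derive_Li2 |]; assumption.
Qed.

Lemma is_derive_RogersL_comp (g : R -> R) (dg t : R) :
  is_derive g t dg -> 0 < g t < 1 -> is_derive (fun s => RogersL (g s)) t (dg * RogersL_deriv (g t)).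
Proof. intros Hg Hr. apply (is_derive_comp RogersL g); [apply is_derive_RogersL |]; assumption. Qed.

Lemma neg_x_ln_x_le (z : R) : 0 < z -> - (z * ln z) <= 2 * sqrt z.
Proof.
intro Hz.
assert (Hs : 0 < sqrt z) by (apply sqrt_lt_R0; lra).
assert (Hss : sqrt z * sqrt z = z) by (apply sqrt_sqrt; lra).
assert (E : ln z = 2 * ln (sqrt z)) by (rewrite <- Hss at 1; rewrite ln_mult by lra; ring).
pose proof (ln_le_sub_1 (/ sqrt z) ltac:(apply Rinv_0_lt_compat; lra)) as H.
rewrite ln_Rinv in H by lra.
set (s := sqrt z) in *. clearbody s. subst z. rewrite E.
assert (s * s * (- ln s) <= s * s * (/ s - 1)) by (apply Rmult_le_compat_l; nra).
replace (s * s * (/ s - 1)) with (s - s * s) in H0 by (field; lra).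
nra.
Qed.

Lemma ln_mul_ln_1_sub_bound (y : R) : 0 < y < 1 -> 0 <= / 2 * ln y * ln (1 - y) <= sqrt (1 - y) / y.
Proof.
intro Hy.
assert (Hl : ln y < 0) by (rewrite <- ln_1; apply ln_increasing; lra).
assert (Hl' : ln (1 - y) < 0) by (rewrite <- ln_1; apply ln_increasing; lra).
pose proof (ln_le_sub_1 (/ y) ltac:(apply Rinv_0_lt_compat; lra)) as H.
rewrite ln_Rinv in H by lra.
pose proof (neg_x_ln_x_le (1 - y) ltac:(lra)) as Hz.
split; [nra |].
assert (Hy' : - ln y <= (1 - y) / y) by (unfold Rdiv; rewrite Rmult_minus_distr_r, Rinv_r; lra).
apply Rle_trans with (/ 2 * ((1 - y) / y) * (- ln (1 - y))); [nra |].
replace (/ 2 * ((1 - y) / y) * (- ln (1 - y))) with (/ 2 * (- ((1 - y) * ln (1 - y))) / y) by (field; lra).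
apply Rmult_le_compat_r; [apply Rlt_le, Rinv_0_lt_compat |]; lra.
Qed.

Lemma is_lim_seq_RogersL_1 (v : nat -> R) : (forall n, 0 < v n < 1) -> is_lim_seq v 1 ->
  is_lim_seq (fun n => RogersL (v n)) zeta2.
Proof.
intros Hv Hl. unfold RogersL. rewrite <- (Rplus_0_r zeta2).
apply is_lim_seq_plus'; [apply is_lim_seq_Li2_1; assumption |].
apply (is_lim_seq_le_le (fun _ => 0) _ (fun n => sqrt (1 - v n) / v n));
  [intro n; apply ln_mul_ln_1_sub_bound, Hv | apply is_lim_seq_const |].
replace 0 with (sqrt (1 - 1) / 1) by (rewrite Rminus_diag, sqrt_0; field).
apply is_lim_seq_div'; [| exact Hl | lra].
apply (is_lim_seq_continuous sqrt (fun n => 1 - v n)); [apply continuity_pt_sqrt; lra |].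
apply is_lim_seq_minus'; [apply is_lim_seq_const | exact Hl].
Qed.

Lemma one_div_one_add_bounds (x : R) : 0 < x -> 0 < 1 / (1 + x) < 1.
Proof.
intro Hx. split; [apply Rdiv_lt_0_compat; lra |].
apply (Rmult_lt_reg_r (1 + x)); [lra |]. field_simplify; lra.
Qed.

Lemma one_sub_sq_bounds (x : R) : 0 < x < 1 -> 0 < 1 - x ^ 2 < 1.
Proof. intro Hx. simpl. split; nra. Qed.

Definition rogers_combination (t : R) : R :=
  2 * RogersL (1 - t) - 2 * RogersL (1 / (1 + t)) - RogersL (1 - t ^ 2).

Lemma is_derive_rogers_combination (t : R) : 0 < t < 1 -> is_derive rogers_combination t 0.
Proof.
intro Ht.
assert (A1 : is_derive (fun s => RogersL (1 - s)) t ((-1) * RogersL_deriv (1 - t))).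
{ apply (is_derive_RogersL_comp (fun s => 1 - s)); [auto_derive; auto; ring | lra]. }
assert (A2 : is_derive (fun s => RogersL (1 / (1 + s))) t ((- 1 / (1 + t) ^ 2) * RogersL_deriv (1 / (1 + t)))).
{ apply (is_derive_RogersL_comp (fun s => 1 / (1 + s))); [auto_derive; [lra | field; lra] |].
  apply one_div_one_add_bounds; lra. }
assert (A3 : is_derive (fun s => RogersL (1 - s ^ 2)) t ((- 2 * t) * RogersL_deriv (1 - t ^ 2))).
{ apply (is_derive_RogersL_comp (fun s => 1 - s ^ 2)); [auto_derive; auto; ring |].
  apply one_sub_sq_bounds, Ht. }
apply is_derive_scal with (k := 2) in A1. apply is_derive_scal with (k := 2) in A2.
pose proof (is_derive_minus _ _ _ _ _ (is_derive_minus _ _ _ _ _ A1 A2) A3) as C.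
unfold rogers_combination.
match type of C with is_derive _ _ ?d => replace 0 with d; [exact C |] end.
change (2 * (-1 * RogersL_deriv (1 - t)) - 2 * (-1 / (1 + t) ^ 2 * RogersL_deriv (1 / (1 + t)))
  - -2 * t * RogersL_deriv (1 - t ^ 2) = 0).
unfold RogersL_deriv.
replace (1 - (1 - t)) with t by ring.
replace (1 - 1 / (1 + t)) with (t / (1 + t)) by (field; lra).
replace (1 - (1 - t ^ 2)) with (t * t) by ring.
replace (1 - t ^ 2) with ((1 - t) * (1 + t)) by ring.
rewrite ln_div, ln_div, ln_mult, ln_mult, ln_1 by lra.
field. repeat split; try lra; nra.
Qed.

Lemma is_lim_seq_RogersL_comp (g : R -> R) (s : nat -> R) :
  continuous g 0 -> g 0 = 1 -> (forall n, 0 < g (s n) < 1) -> is_lim_seq s 0 ->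
  is_lim_seq (fun n => RogersL (g (s n))) zeta2.
Proof.
intros Hg Hg0 Hs Hl. apply (is_lim_seq_RogersL_1 (fun n => g (s n))); [exact Hs |].
rewrite <- Hg0. eapply filterlim_comp; [exact Hl | exact Hg].
Qed.

Lemma rogers_combination_value (t : R) : 0 < t < 1 -> rogers_combination t = - zeta2.
Proof.
intro Ht.
set (s := fun n : nat => / INR (S (S n))).
assert (Hs : forall n, 0 < s n < 1).
{ intro n. unfold s. rewrite S_INR. pose proof (lt_0_INR (S n) (Nat.lt_0_succ n)).
  split; [apply Rinv_0_lt_compat; lra |]. rewrite <- Rinv_1. apply Rinv_lt_contravar; lra. }
assert (Hl : is_lim_seq s 0) by apply (is_lim_seq_incr_1 (fun n => / INR (S n))), is_lim_seq_inv_INR_S.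
assert (HF : is_lim_seq (fun n => rogers_combination (s n)) (- zeta2)).
{ unfold rogers_combination.
  replace (- zeta2) with (2 * zeta2 - 2 * zeta2 - zeta2) by ring.
  apply is_lim_seq_minus'; [apply is_lim_seq_minus'; apply is_lim_seq_mult'; try apply is_lim_seq_const |].
  - apply (is_lim_seq_RogersL_comp (fun x => 1 - x)); [| ring | | exact Hl].
    + apply continuous_of_ex_derive. auto_derive. exact I.
    + intro n. specialize (Hs n). lra.
  - apply (is_lim_seq_RogersL_comp (fun x => 1 / (1 + x))); [| field | | exact Hl].
    + apply continuous_of_ex_derive. auto_derive. lra.
    + intro n. apply one_div_one_add_bounds, Hs.
  - apply (is_lim_seq_RogersL_comp (fun x => 1 - x ^ 2)); [| ring | | exact Hl].
    + apply continuous_of_ex_derive. auto_derive. exact I.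
    + intro n. apply one_sub_sq_bounds, Hs. }
apply is_lim_seq_unique in HF.
rewrite (Lim_seq_ext _ (fun _ => rogers_combination t)), Lim_seq_const in HF.
- injection HF; auto.
- intro n. apply (is_derive_0_eq rogers_combination 0 1); [exact is_derive_rogers_combination | apply Hs | exact Ht].
Qed.

(** * The root of P_n *)

Lemma sum_f_R0_pow_add (x : R) (n m : nat) :
  sum_f_R0 (fun k => x ^ (n + k)) m = x ^ n * sum_f_R0 (fun k => x ^ k) m.
Proof.
induction m as [| m IH]; simpl sum_f_R0.
- rewrite Nat.add_0_r. simpl. ring.
- rewrite IH, pow_add, <- tech_pow_Rmult. ring.
Qed.

Lemma Pn_1 (n : nat) : (0 < n)%nat -> Pn n 1 = 2.
Proof.
intro Hn. unfold Pn. rewrite sum_f_R0_pow_add, pow1, Rmult_1_l.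
assert (Hones : forall m, sum_f_R0 (fun k => 1 ^ k) m = INR (S m)).
{ intro m. rewrite (sum_eq _ (fun _ => 1)) by (intros; apply pow1). rewrite sum_cte. ring. }
rewrite !Hones. destruct n as [| n]; [lia |]. simpl Init.Nat.pred. rewrite !S_INR. ring.
Qed.

Lemma Pn_mul_sub_1 (n : nat) (u : R) : (0 < n)%nat ->
  (u - 1) * Pn n u = (u ^ n) ^ 2 * u ^ 2 - 2 * u ^ n + 1.
Proof.
intro Hn. unfold Pn. rewrite sum_f_R0_pow_add, Rmult_minus_distr_l.
rewrite (Rmult_comm (u - 1) (u ^ n * _)), Rmult_assoc, GP_finite, (Rmult_comm (u - 1)), GP_finite.
replace (Init.Nat.pred n + 1)%nat with n by lia.
replace (S n + 1)%nat with (n + 2)%nat by lia. rewrite pow_add. ring.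
Qed.

Lemma Pn_root_param (n : nat) (u : R) : (0 < n)%nat -> 0 < u -> Pn n u = 0 ->
  exists t, 0 < t < 1 /\ u ^ (n + 2) = 1 - t /\ u ^ n = 1 / (1 + t) /\ u ^ 2 = 1 - t ^ 2.
Proof.
intros Hn Hu HP.
pose proof (Pn_mul_sub_1 n u Hn) as E. rewrite HP, Rmult_0_r in E.
assert (HX : 0 < u ^ n) by (apply pow_lt; lra).
assert (Hu1 : u <> 1) by (intros ->; rewrite Pn_1 in HP by assumption; lra).
assert (Hlt : u < 1).
{ destruct (Rlt_le_dec u 1) as [H | H]; [exact H | exfalso].
  assert (u ^ 2 > 1) by (simpl; nra).
  set (X := u ^ n) in *.
  assert (0 < X ^ 2 * (u ^ 2 - 1)) by (apply Rmult_lt_0_compat; [apply pow_lt |]; lra).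
  pose proof (pow2_ge_0 (X - 1)). lra. }
assert (Hu2 : 0 < u ^ 2 < 1) by (simpl; split; nra).
assert (HX1 : u ^ n < 1) by (apply pow_lt_1_compat; [lra | exact Hn]).
exists (1 - u ^ n * u ^ 2). rewrite pow_add.
set (X := u ^ n) in *. repeat split; [nra | nra | ring | | ].
- field_simplify_eq; [nra | nra].
- nra.
Qed.

Theorem mainTheorem7 (n : nat) (u : R) :
  (0 < n)%nat -> 0 < u -> Pn n u = 0 ->
  2 * RogersL (u ^ (n + 2)) - 2 * RogersL (u ^ n) - RogersL (u ^ 2) = - zeta2.
Proof.
intros Hn Hu HP.
destruct (Pn_root_param n u Hn Hu HP) as (t & Ht & Hn2 & Hn0 & H2).
rewrite Hn2, Hn0, H2. exact (rogers_combination_value t Ht).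
Qed.
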